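(* For all integers $t\ge0$, $\mathcal K(t)\ge0$.
   Context: Given $n$, nonnegative numbers $\sigma_1^2,\dots,\sigma_n^2$, $\gamma>0$, $\zeta\in(0,1]$, $\Delta\in[0,1)$. For $j\in[n]$: $\Omega_j=1-\gamma\zeta\sigma_j^2+\Delta$, $\lambda_{2,j},\lambda_{3,j}=\frac{-2\Delta+\Omega_j^2\pm\sqrt{\Omega_j^2(\Omega_j^2-4\Delta)}}{2}$ (complex square root if the argument is negative). $\mathcal K(t)=\gamma^2\zeta(1-\zeta)H_2(t)$ with $H_2(t)=\frac1n\sum_{j=1}^n\frac{2\sigma_j^4}{\Omega_j^2-4\Delta}\big(-\Delta^{t+1}+\frac12\lambda_{2,j}^{t+1}+\frac12\lambda_{3,j}^{t+1}\big)$ (terms with $\Omega_j^2=4\Delta$ understood by continuity). *)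

From HB Require Import structures.
From mathcomp Require Import all_boot all_order all_algebra.
From mathcomp Require Import complex.
Set Implicit Arguments. Unset Strict Implicit. Unset Printing Implicit Defensive.
Import Order.TTheory GRing.Theory Num.Theory.
Local Open Scope ring_scope.
Local Open Scope complex_scope.

Section Defs.
Variable R : rcfType.

Definition csqrt_real (x : R) : R[i] :=
  if 0 <= x then (Num.sqrt x)%:C else Complex 0 (Num.sqrt (- x)).

Definition Omega (gamma zeta Delta s : R) : R := 1 - gamma * zeta * s + Delta.

Definition lam2 (Om Delta : R) : R[i] :=
  ((- 2 * Delta + Om ^+ 2)%:C + csqrt_real (Om ^+ 2 * (Om ^+ 2 - 4 * Delta))) / 2%:R.
Definition lam3 (Om Delta : R) : R[i] :=
  ((- 2 * Delta + Om ^+ 2)%:C - csqrt_real (Om ^+ 2 * (Om ^+ 2 - 4 * Delta))) / 2%:R.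

(* j-th summand of H_2(t), with s = sigma_j^2 (so sigma_j^4 = s^2). *)
Definition H2term (gamma zeta Delta s : R) (t : nat) : R :=
  let Om := Omega gamma zeta Delta s in
  if Om ^+ 2 - 4 * Delta == 0 then
    2 * s ^+ 2 * ((t.+1)%:R ^+ 2 * Delta ^+ t / 2)
  else
    2 * s ^+ 2 / (Om ^+ 2 - 4 * Delta) *
    complex.Re (- (Delta ^+ t.+1)%:C + (lam2 Om Delta) ^+ t.+1 / 2%:R
        + (lam3 Om Delta) ^+ t.+1 / 2%:R).

Definition H2 (n : nat) (s2 : 'I_n -> R) (gamma zeta Delta : R) (t : nat) : R :=
  n%:R^-1 * \sum_(j < n) H2term gamma zeta Delta (s2 j) t.

Definition Kfun (n : nat) (s2 : 'I_n -> R) (gamma zeta Delta : R) (t : nat) : R :=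
  gamma ^+ 2 * zeta * (1 - zeta) * H2 s2 gamma zeta Delta t.
End Defs.

From HB Require Import structures.
From mathcomp Require Import all_boot all_order all_algebra.
From mathcomp Require Import complex.
From mathcomp Require Import ring.
Import Order.TTheory GRing.Theory Num.Theory.
Local Open Scope ring_scope.

(* Write r = sqrt(Om^2 - 4 Delta) (imaginary when negative).  Since
   sqrt(Om^2 (Om^2 - 4 Delta)) = |Om| r, the eigenvalues lam2 and lam3 are the
   squares of the roots p, q = (|Om| +- r) / 2 of X^2 - |Om| X + Delta.  Hence
     - Delta^m + (lam2^m + lam3^m) / 2 = (p^m - q^m)^2 / 2 = r^2 U_m^2 / 2
   where U is the (real) Lucas sequence of (|Om|, Delta), so the j-th summand
   of H2(t) is sigma_j^4 U_(t+1)^2 >= 0.  In the double-root case Om^2 = 4 Delta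
   one has U_m = m (|Om|/2)^(m-1), so the continuous extension takes the same
   value. *)

Fixpoint lucasU {S : pzRingType} (P Q : S) (m : nat) : S :=
  match m with
  | 0 => 0
  | 1 => 1
  | (k.+1 as m').+1 => P * lucasU P Q m' - Q * lucasU P Q k
  end.

Lemma lucasU_rec (S : pzRingType) (P Q : S) m :
  lucasU P Q m.+2 = P * lucasU P Q m.+1 - Q * lucasU P Q m.
Proof. by []. Qed.

Section LucasSequence.
Variable S : comPzRingType.
Implicit Types p q a : S.

Lemma subrXX_lucasU p q m :
  p ^+ m - q ^+ m = (p - q) * lucasU (p + q) (p * q) m.
Proof.
elim/ltn_ind: m => -[|[|m]] IH; first by rewrite !expr0 subrr mulr0.
  by rewrite !expr1 mulr1.
rewrite lucasU_rec mulrBr [_ * (_ * lucasU _ _ m.+1)]mulrCA.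
by rewrite [_ * (_ * lucasU _ _ m)]mulrCA -!IH // !exprS; ring.
Qed.

Lemma lucasU_double a m : lucasU (2 * a) (a ^+ 2) m.+1 = m.+1%:R * a ^+ m.
Proof.
elim/ltn_ind: m => -[|[|m]] IH; first by rewrite expr0 mulr1.
  by rewrite lucasU_rec /= mulr0 subr0 !mulr1.
by rewrite lucasU_rec !IH // !exprS; ring.
Qed.

End LucasSequence.

Lemma rmorph_lucasU (S T : pzRingType) (f : {rmorphism S -> T}) (P Q : S) m :
  f (lucasU P Q m) = lucasU (f P) (f Q) m.
Proof.
elim/ltn_ind: m => -[|[|m]] IH; rewrite ?rmorph0 ?rmorph1 //.
by rewrite !lucasU_rec rmorphB !rmorphM !IH.
Qed.

Section RealComplexSqrt.
Variable R : rcfType.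
Local Open Scope complex_scope.
Implicit Types a x : R.

Lemma csqrt_realE x : csqrt_real x = Complex (Num.sqrt x) (Num.sqrt (- x)).
Proof.
rewrite /csqrt_real; case: ifP => hx.
  by have /eqP -> : Num.sqrt (- x) == 0 by rewrite sqrtr_eq0 oppr_le0.
by have /eqP -> : Num.sqrt x == 0 by rewrite sqrtr_eq0 ltW // ltNge hx.
Qed.

Lemma sqr_csqrt_real x : csqrt_real x ^+ 2 = x%:C.
Proof.
rewrite /csqrt_real; case: ifP => hx; first by rewrite -rmorphXn /= sqr_sqrtr.
have hNx : 0 <= - x by rewrite oppr_ge0 ltW // ltNge hx.
by rewrite expr2 /GRing.mul /= !mul0r mulr0 addr0 sub0r -expr2 sqr_sqrtr // opprK.
Qed.

Lemma csqrt_real_sqrM a x : csqrt_real (a ^+ 2 * x) = `|a|%:C * csqrt_real x.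
Proof.
rewrite !csqrt_realE -mulrN !(sqrtrM _ (sqr_ge0 a)) sqrtr_sqr.
by rewrite /GRing.mul /= !mul0r subr0 addr0.
Qed.

End RealComplexSqrt.

Section CharacteristicRoots.
Variables (R : rcfType) (Om D : R).
Local Open Scope complex_scope.

Let r : R[i] := csqrt_real (Om ^+ 2 - 4 * D).
Let p : R[i] := (`|Om|%:C + r) / 2%:R.
Let q : R[i] := (`|Om|%:C - r) / 2%:R.

Let sqr_r : r ^+ 2 = (Om ^+ 2 - 4 * D)%:C.
Proof. exact: sqr_csqrt_real. Qed.

Let sqr_normOm : (`|Om|%:C) ^+ 2 = (Om ^+ 2)%:C :> R[i].
Proof. by rewrite -rmorphXn real_normK ?num_real. Qed.

Lemma lam2E : lam2 Om D = p ^+ 2.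
Proof.
rewrite /lam2 csqrt_real_sqrM -/r /p expr_div_n sqrrD sqr_r sqr_normOm.
rewrite !(rmorphD, rmorphB, rmorphM, rmorphN, rmorph_nat) /=.
by field.
Qed.

Lemma lam3E : lam3 Om D = q ^+ 2.
Proof.
rewrite /lam3 csqrt_real_sqrM -/r /q expr_div_n sqrrB sqr_r sqr_normOm.
rewrite !(rmorphD, rmorphB, rmorphM, rmorphN, rmorph_nat) /=.
by field.
Qed.

Let addpq : p + q = `|Om|%:C.
Proof. by rewrite /p /q; field. Qed.

Let mulpq : p * q = D%:C.
Proof.
have -> : p * q = ((`|Om|%:C) ^+ 2 - r ^+ 2) / 4%:R by rewrite /p /q; field.
rewrite sqr_normOm sqr_r !(rmorphB, rmorphM, rmorph_nat) /=.
by field.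
Qed.

Let subpq : p - q = r.
Proof. by rewrite /p /q; field. Qed.

Lemma lam_sum_lucasU m :
  - (D ^+ m)%:C + lam2 Om D ^+ m / 2%:R + lam3 Om D ^+ m / 2%:R
  = ((Om ^+ 2 - 4 * D) * lucasU `|Om| D m ^+ 2 / 2%:R)%:C.
Proof.
rewrite lam2E lam3E ![(_ ^+ 2) ^+ m]exprAC.
have -> : (D ^+ m)%:C = p ^+ m * q ^+ m by rewrite -exprMn mulpq rmorphXn.
have -> : forall u v : R[i], - (u * v) + u ^+ 2 / 2%:R + v ^+ 2 / 2%:R = (u - v) ^+ 2 / 2%:R.
  by move=> u v; field.
rewrite subrXX_lucasU addpq mulpq subpq -(@rmorph_lucasU _ _ (real_complex R)).
rewrite exprMn sqr_r !(rmorphM, rmorphXn, rmorph_nat) /=.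
by field.
Qed.

End CharacteristicRoots.

Lemma H2termE (R : rcfType) (gamma zeta Delta s : R) t :
  H2term gamma zeta Delta s t
  = s ^+ 2 * lucasU `|Omega gamma zeta Delta s| Delta t.+1 ^+ 2.
Proof.
rewrite /H2term; set Om := Omega _ _ _ _; case: eqP => [hX | /eqP hX].
  have [a hOm hDelta] : exists2 a, `|Om| = 2 * a & Delta = a ^+ 2.
    exists (`|Om| / 2); first by field.
    have -> : Delta = (Om ^+ 2 - (Om ^+ 2 - 4 * Delta)) / 4 by field.
    by rewrite hX subr0 expr_div_n real_normK ?num_real //; field.
  by rewrite hOm hDelta lucasU_double exprAC exprMn; field.
rewrite (lam_sum_lucasU _ Om Delta t.+1).
(* [U] is frozen so that [/=] computes [Re x%:C] without unfolding it. *)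
set U := lucasU _ _ _; rewrite /=.
by field.
Qed.

Theorem lemma5 (R : rcfType) (n : nat) (s2 : 'I_n -> R) (gamma zeta Delta : R)
  (hs2 : forall j, 0 <= s2 j) (hgamma : 0 < gamma)
  (hzeta0 : 0 < zeta) (hzeta1 : zeta <= 1)
  (hDelta0 : 0 <= Delta) (hDelta1 : Delta < 1) :
  forall t : nat, 0 <= Kfun s2 gamma zeta Delta t.
Proof.
(* By [H2termE] every summand of H2 is a square: only [0 < zeta <= 1] is used. *)
move=> t; apply: mulr_ge0.
  by rewrite mulr_ge0 ?subr_ge0 // mulr_ge0 ?sqr_ge0 ?ltW.
apply: mulr_ge0; first by rewrite invr_ge0 ler0n.
by apply: sumr_ge0 => j _; rewrite H2termE mulr_ge0 ?sqr_ge0.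
Qed.
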